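(* Let $V=\{1,\dots,n\}$ and let $Q=(q_{ij})_{i,j=1}^n$ be a symmetric matrix with $0\le q_{ij}\le 1$. Let $G$ be the inhomogeneous random graph on $V$ obtained by joining each pair $\{i,j\}$ independently with probability $q_{ij}$. Let $S\subseteq V$ with $|S|=m$, and let $G(S)$ be the union of the connected components of $G$ that intersect $S$. Let $0<\gamma<1$. (a) If $\sum_{j\in V\setminus S} q_{ij}\le\gamma$ for all nodes $i\in V$, then $\mathbb E[|G(S)|]\le \frac{1}{1-\gamma}\,m$. (b) If $q_{ij}=\gamma/n$ for all $i\neq j$ with $i\in V\setminus S$, then $\mathbb E[|G(S)|]\ge \frac{n+\gamma n}{n+\gamma m}\,m$.
   Context: $|G(S)|$ denotes the number of nodes of $G(S)$. *)

From mathcomp Require Import all_boot all_order all_algebra.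
Set Implicit Arguments. Unset Strict Implicit. Unset Printing Implicit Defensive.
Import Order.TTheory GRing.Theory Num.Theory.
Local Open Scope ring_scope.

Section RandomGraph.
Variables (R : realFieldType) (n : nat).

(* unordered pairs {i,j}, i<>j, represented as (i,j) with i < j *)
Definition vpairs : {set 'I_n * 'I_n} := [set p : 'I_n * 'I_n | (val p.1 < val p.2)%N].

Definition graph_prob (Q : 'M[R]_n) (E : {set 'I_n * 'I_n}) : R :=
  \prod_(p in vpairs) (if p \in E then Q p.1 p.2 else 1 - Q p.1 p.2).

Definition adj (E : {set 'I_n * 'I_n}) : rel 'I_n :=
  fun i j => ((i, j) \in E) || ((j, i) \in E).

Definition GS (E : {set 'I_n * 'I_n}) (S : {set 'I_n}) : {set 'I_n} :=
  [set v | [exists s in S, connect (adj E) s v]].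

Definition expected_GS (Q : 'M[R]_n) (S : {set 'I_n}) : R :=
  \sum_(E : {set 'I_n * 'I_n} | E \subset vpairs) graph_prob Q E * (#|GS E S|)%:R.

End RandomGraph.

(* (a) Every node of G(S) is the end of a simple path of G that starts in S and
   never returns to S.  A fixed simple path is present with probability the
   product of its q_ij, and by the row-sum hypothesis the total weight of the
   k-step walks from a node that stay outside S is at most gamma^k; hence
   E|G(S)| <= m (1 + gamma + gamma^2 + ...) = m / (1 - gamma).
   (b) G(S) contains S and every node outside S with an edge to S; such a node
   has one with probability 1 - (1 - gamma/n)^m, and the dual Bernoulli
   inequality (1 - x)^m (1 + m x) <= 1 turns m + (n - m)(1 - (1 - gamma/n)^m)
   into the stated bound. *)

From mathcomp Require Import all_boot all_order all_algebra ring lra.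
Import Order.TTheory GRing.Theory Num.Theory.
Set Implicit Arguments. Unset Strict Implicit. Unset Printing Implicit Defensive.
Local Open Scope ring_scope.

Lemma sum_subsets_prod (R : comPzSemiRingType) (T : finType) (P : {set T}) (a b : T -> R) :
  \sum_(E : {set T} | E \subset P) \prod_(p in P) (if p \in E then a p else b p)
  = \prod_(p in P) (a p + b p).
Proof.
pose a' p := if p \in P then a p else 0.
pose b' p := if p \in P then b p else 1.
have := @bigA_distr R 0 1 *%R +%R T a' b'.
have -> : \prod_p (a' p + b' p) = \prod_(p in P) (a p + b p).
  by rewrite [RHS]big_mkcond; apply: eq_bigr => p _; rewrite /a' /b'; case: ifP; rewrite ?add0r.
move=> ->; rewrite [LHS]big_mkcond; apply: eq_bigr => E _.
case: ifPn => [/subsetP EP | /subsetPn[p pE pNP]].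
  rewrite [LHS]big_mkcond; apply: eq_bigr => p _; rewrite /a' /b'.
  by case: ifPn => // pNP; rewrite ifN // (contra (EP p)).
by rewrite [RHS](bigD1 p) //= pE /a' (negbTE pNP) mul0r.
Qed.

Lemma natr_subset_prod (R : comPzSemiRingType) (T : finType) (A C : {set T}) :
  (A \subset C)%:R = \prod_(p in A) (p \in C)%:R :> R.
Proof.
case: (boolP (A \subset C)) => [/subsetP AC | /subsetPn[p pA pNC]].
  by rewrite big1 // => p /AC ->.
by rewrite [RHS](bigD1 p) //= (negbTE pNC) mul0r.
Qed.

Lemma prod_mkcond_subset (R : comPzSemiRingType) (T : finType) (A P : {set T})
    (F : T -> R) :
  A \subset P -> \prod_(p in P) (if p \in A then F p else 1) = \prod_(p in A) F p.
Proof.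
by move=> /subsetP AP; rewrite -big_mkcondr; apply: eq_bigl => p; rewrite andb_idl // => /AP.
Qed.

Lemma big_tuple_cons (R : Type) (idx : R) (op : Monoid.com_law idx) (T : finType) k
    (F : k.+1.-tuple T -> R) :
  \big[op/idx]_(t : k.+1.-tuple T) F t
  = \big[op/idx]_(x : T) \big[op/idx]_(t : k.-tuple T) F [tuple of x :: t].
Proof.
rewrite pair_big (reindex (fun p : T * k.-tuple T => [tuple of p.1 :: p.2])) //=.
apply: onW_bij; exists (fun t => (thead t, [tuple of behead t])) => [[x t]|t] /=.
  by rewrite theadE; congr (_, _); apply: val_inj.
exact/esym/tuple_eta.
Qed.

Lemma path_last_hit (T : eqType) (e : rel T) (a : pred T) x p :
  path e x p -> uniq (x :: p) -> has a (x :: p) ->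
  exists s t, [/\ a s, path e s t, uniq (s :: t), all (predC a) t & last s t = last x p].
Proof.
elim: p x => [|y p IHp] x; first by rewrite /= orbF => _ _ ax; exists x, [::].
move=> /andP[exy pth] /andP[xNyp uyp].
have [ayp _|ayp /orP[ax|ayp']] := boolP (has a (y :: p)); first exact: IHp.
  by exists x, (y :: p); split; rewrite ?all_predC //; apply/andP.
by case/negP: ayp.
Qed.

Lemma geometric_sum_le (R : numFieldType) (g : R) N :
  0 <= g < 1 -> \sum_(k < N) g ^+ k <= (1 - g)^-1.
Proof.
case/andP=> g_ge0 g_lt1; have g1_gt0 : 0 < 1 - g by rewrite subr_gt0.
have telescope : (1 - g) * \sum_(k < N) g ^+ k = 1 - g ^+ N.
  by rewrite -opprB mulNr -subrX1 opprB.
rewrite -(ler_pM2l g1_gt0) telescope mulfV ?gt_eqF //.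
by rewrite lerBlDr lerDl exprn_ge0.
Qed.

Lemma bernoulli_dual (R : realDomainType) (x : R) m :
  0 <= x <= 1 -> (1 - x) ^+ m * (1 + m%:R * x) <= 1.
Proof.
case/andP=> x_ge0 x_le1; elim: m => [|m IHm]; first by rewrite expr0 mul0r addr0 mulr1.
apply: le_trans IHm; rewrite exprSr -mulrA ler_wpM2l ?exprn_ge0 ?subr_ge0 //.
by rewrite -natr1; have : 0 <= m%:R :> R := ler0n _ _; nra.
Qed.

Lemma bernoulli_dual_div (R : realFieldType) (g : R) n m : 0 <= g <= 1 -> (m <= n)%N ->
  (1 - g / n%:R) ^+ m * (n%:R + g * m%:R) <= n%:R.
Proof.
case/andP=> g_ge0 g_le1 mn; have [n0|n_gt0] := posnP n.
  by move: mn; rewrite n0 leqn0 => /eqP->; rewrite !mulr0n mulr0 addr0 mulr0.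
have -> : n%:R + g * m%:R = n%:R * (1 + m%:R * (g / n%:R)).
  by field; rewrite pnatr_eq0 -lt0n.
rewrite mulrCA ler_piMr ?ler0n // bernoulli_dual // divr_ge0 ?ler0n //=.
by rewrite ler_pdivrMr ?ltr0n // mul1r (le_trans g_le1) // ler1n.
Qed.

Lemma card_ord_le n (A : {pred 'I_n}) : (#|A| <= n)%N.
Proof. by rewrite -[n in (_ <= n)%N]card_ord max_card. Qed.

Lemma lower_bound_arith (R : realFieldType) (N M g p : R) :
  0 <= M <= N -> 0 <= g -> p * (N + g * M) <= N ->
  (N + g * N) / (N + g * M) * M <= M + (N - M) * (1 - p).
Proof.
case/andP=> M_ge0 MN g_ge0 hp; have gM_ge0 : 0 <= g * M by rewrite mulr_ge0.
have [D0|D_gt0] := eqVneq (N + g * M) 0.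
  have [N0 M0] : N = 0 /\ M = 0 by split; lra.
  by rewrite N0 M0 !mulr0 subrr mul0r addr0.
have {}D_gt0 : 0 < N + g * M by rewrite lt_def D_gt0 addr_ge0 // (le_trans M_ge0).
have : 0 <= (N - M) * (N - p * (N + g * M)) by rewrite mulr_ge0 ?subr_ge0.
by rewrite mulrAC ler_pdivrMr //; nra.
Qed.

Section Edges.
Variable n : nat.
Implicit Types (E : {set 'I_n * 'I_n}) (S : {set 'I_n}) (i j x y v : 'I_n) (t : seq 'I_n).

Definition edge i j : 'I_n * 'I_n := if (i < j)%N then (i, j) else (j, i).

Lemma edgeC i j : edge i j = edge j i.
Proof. by rewrite /edge; case: ltngtP => // /ord_inj ->. Qed.

Lemma edge_inj i : injective (edge i).
Proof. by move=> j k; rewrite /edge; do 2!case: ifP => _; case=> // -> ->. Qed.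

Lemma edge_vpairs i j : i != j -> edge i j \in vpairs n.
Proof.
by move=> ij; rewrite /edge inE; case: (ltngtP i j) => //= /ord_inj eq_ij; rewrite eq_ij eqxx in ij.
Qed.

Lemma adj_edge E i j : E \subset vpairs n -> adj E i j = (edge i j \in E).
Proof.
move=> /subsetP Ev; rewrite /adj /edge.
have vpairsN k l : (k, l) \in E -> (l < k)%N = false.
  by move=> /Ev; rewrite inE /= => /ltnW; rewrite leqNgt => /negbTE.
case: ltngtP => [ij|ji|/ord_inj ->]; last exact: orbb.
  by case: (boolP ((j, i) \in E)) => [/vpairsN|]; rewrite ?ij ?orbF.
by case: (boolP ((i, j) \in E)) => [/vpairsN|]; rewrite ?ji.
Qed.

Lemma mem_pairmap_edge y t p :
  p \in pairmap edge y t -> (p.1 \in y :: t) && (p.2 \in y :: t).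
Proof.
elim: t y => [|z t IHt] y //=; rewrite inE => /orP[/eqP ->|/IHt /andP[]].
  by rewrite /edge; case: ifP; rewrite /= !inE !eqxx ?orbT.
by rewrite !inE => -> ->; rewrite !orbT.
Qed.

Lemma uniq_pairmap_edge x t : uniq (x :: t) -> uniq (pairmap edge x t).
Proof.
elim: t x => [|y t IHt] x //= /andP[xNyt uyt]; rewrite IHt // andbT.
apply: contra xNyt => /mem_pairmap_edge /andP[].
by rewrite /edge; case: ifP => _ /= ? ?.
Qed.

Lemma pairmap_edge_vpairs x t : uniq (x :: t) -> {subset pairmap edge x t <= vpairs n}.
Proof.
elim: t x => [|y t IHt] x //= /andP[xNyt uyt] p; rewrite inE => /orP[/eqP ->|].
  by apply: edge_vpairs; apply: contraNneq xNyt => ->; rewrite mem_head.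
exact: IHt.
Qed.

Lemma path_adj_edges E x t :
  E \subset vpairs n -> path (adj E) x t = ([set p in pairmap edge x t] \subset E).
Proof.
move=> Ev; elim: t x => [|y t IHt] x /=; first by rewrite set_nil sub0set.
by rewrite set_cons subUset sub1set IHt adj_edge.
Qed.

Definition escape_path E S s t :=
  [&& uniq (s :: t), all [predC S] t & path (adj E) s t].

Lemma GS_escape_path E S v :
  v \in GS E S -> exists s t, [/\ s \in S, escape_path E S s t & last s t = v].
Proof.
rewrite inE => /exists_inP[s0 s0S /connectP[p pth ->]].
case/shortenP: pth => p' pth' up' _.
have [|s [t [sS pth us avoid <-]]] := path_last_hit (a := [in S]) pth' up'.
  by rewrite /= s0S.
by exists s, t; split=> //; apply/and3P.
Qed.

Lemma card_GS_le E S :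
  (#|GS E S| <= \sum_(s in S) \sum_(k < n) \sum_(t : k.-tuple 'I_n) escape_path E S s t)%N.
Proof.
pose paths_to v := (\sum_(s in S) \sum_(k < n) \sum_(t : k.-tuple 'I_n)
  (escape_path E S s t && (last s t == v)))%N.
have paths_to_gt0 v : v \in GS E S -> (0 < paths_to v)%N.
  case/GS_escape_path => s [t [sS esc <-]].
  have kn : (size t < n)%N.
    case/and3P: esc => /card_uniqP card_st _ _.
    by have := max_card (mem (s :: t)); rewrite card_st card_ord.
  by rewrite /paths_to (bigD1 s) //= (bigD1 (Ordinal kn)) //= (bigD1 (in_tuple t)) //= esc eqxx.
rewrite -sum1_card (@leq_trans (\sum_(v in GS E S) paths_to v)) ?leq_sum //.
rewrite (@leq_trans (\sum_v paths_to v)) //.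
  by rewrite [X in (_ <= X)%N](bigID [in GS E S]) /= leq_addr.
rewrite /paths_to exchange_big leq_sum // => s _; rewrite exchange_big leq_sum // => k _.
rewrite exchange_big leq_sum // => t _; rewrite (bigD1 (last s t)) //= eqxx andbT big1 ?addn0 //.
by move=> v; rewrite eq_sym => /negbTE ->; rewrite andbF.
Qed.

Definition edges_to S v : {set 'I_n * 'I_n} := [set edge v s | s in S].

Lemma edges_to_vpairs S v : v \notin S -> edges_to S v \subset vpairs n.
Proof.
move=> vNS; apply/subsetP => _ /imsetP[s sS ->].
by apply: edge_vpairs; apply: contraNneq vNS => ->.
Qed.

Lemma card_GS_ge E S : E \subset vpairs n ->
  (#|S| + \sum_(v in ~: S) ~~ [disjoint edges_to S v & E] <= #|GS E S|)%N.
Proof.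
move=> Ev; have S_GS : S \subset GS E S.
  by apply/subsetP => s sS; rewrite inE; apply/exists_inP; exists s.
rewrite -(cardsID S (GS E S)) (setIidPr S_GS) leq_add2l -sum1_card.
rewrite [X in (_ <= X)%N]big_mkcond [X in (X <= _)%N]big_mkcond leq_sum // => v _.
rewrite !inE; case: (v \in S) => //=; rewrite -setI_eq0.
case: set0Pn => // -[_ /setIP[/imsetP[s sS ->] vsE]].
rewrite ifT //; apply/exists_inP; exists s => //.
by apply: connect1; rewrite adj_edge // edgeC.
Qed.

End Edges.

Section Expectation.
Variables (R : realFieldType) (n : nat) (Q : 'M[R]_n).
Implicit Types (A B E : {set 'I_n * 'I_n}) (f g : {set 'I_n * 'I_n} -> R).
Implicit Types (S : {set 'I_n}) (v : 'I_n).

Definition graph_expect f : R :=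
  \sum_(E : {set 'I_n * 'I_n} | E \subset vpairs n) graph_prob Q E * f E.

Lemma eq_graph_expect f g :
  (forall E, E \subset vpairs n -> f E = g E) -> graph_expect f = graph_expect g.
Proof. by move=> fg; apply: eq_bigr => E /fg ->. Qed.

Lemma graph_expectD f g : graph_expect (fun E => f E + g E) = graph_expect f + graph_expect g.
Proof. by rewrite -big_split; apply: eq_bigr => E _; rewrite mulrDr. Qed.

Lemma graph_expectB f g : graph_expect (fun E => f E - g E) = graph_expect f - graph_expect g.
Proof. by rewrite -sumrB; apply: eq_bigr => E _; rewrite mulrBr. Qed.

Lemma graph_expect_sum (I : finType) (P : pred I) (F : I -> {set 'I_n * 'I_n} -> R) :
  graph_expect (fun E => \sum_(i | P i) F i E) = \sum_(i | P i) graph_expect (F i).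
Proof. by rewrite exchange_big; apply: eq_bigr => E _; rewrite mulr_sumr. Qed.

Lemma graph_expect_prod (F : 'I_n * 'I_n -> bool -> R) :
  graph_expect (fun E => \prod_(p in vpairs n) F p (p \in E))
  = \prod_(p in vpairs n) (Q p.1 p.2 * F p true + (1 - Q p.1 p.2) * F p false).
Proof.
rewrite -sum_subsets_prod; apply: eq_bigr => E _.
by rewrite /graph_prob -big_split; apply: eq_bigr => p _; case: (p \in E).
Qed.

Lemma graph_expect_subset A :
  A \subset vpairs n -> graph_expect (fun E => (A \subset E)%:R) = \prod_(p in A) Q p.1 p.2.
Proof.
move=> Av; rewrite -(prod_mkcond_subset _ Av).
under eq_graph_expect => E _ do rewrite natr_subset_prod -(prod_mkcond_subset _ Av).
rewrite (graph_expect_prod (fun p b => if p \in A then b%:R else 1)).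
apply: eq_bigr => p _; by case: (p \in A); rewrite ?mulr1 ?mulr0 ?addr0 // addrC subrK.
Qed.

Lemma graph_expect_disjoint B : B \subset vpairs n ->
  graph_expect (fun E => [disjoint B & E]%:R) = \prod_(p in B) (1 - Q p.1 p.2).
Proof.
move=> Bv; rewrite -(prod_mkcond_subset _ Bv).
under eq_graph_expect => E _.
  rewrite disjoints_subset natr_subset_prod.
  under eq_bigr => p _ do rewrite in_setC.
  rewrite -(prod_mkcond_subset _ Bv).
  over.
rewrite (graph_expect_prod (fun p b => if p \in B then (~~ b)%:R else 1)).
apply: eq_bigr => p _; by case: (p \in B); rewrite /= ?mulr1 ?mulr0 ?add0r // addrC subrK.
Qed.

Lemma graph_expect_cst c : graph_expect (fun=> c) = c.
Proof.
have mass1 : graph_expect (fun=> 1) = 1.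
  transitivity (graph_expect (fun E => (set0 \subset E)%:R)).
    by apply: eq_graph_expect => E _; rewrite sub0set.
  by rewrite graph_expect_subset ?sub0set // big_set0.
transitivity (graph_expect (fun=> 1) * c); last by rewrite mass1 mul1r.
by rewrite /graph_expect mulr_suml; apply: eq_bigr => E _; rewrite mulr1.
Qed.

Hypothesis Q01 : forall i j, 0 <= Q i j <= 1.

Lemma graph_prob_ge0 E : 0 <= graph_prob Q E.
Proof.
apply: prodr_ge0 => p _; have /andP[Q_ge0 Q_le1] := Q01 p.1 p.2.
by case: ifP; rewrite ?subr_ge0.
Qed.

Lemma ler_graph_expect f g :
  (forall E, E \subset vpairs n -> f E <= g E) -> graph_expect f <= graph_expect g.
Proof. by move=> fg; apply: ler_sum => E Ev; rewrite ler_wpM2l ?graph_prob_ge0 ?fg. Qed.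

Definition path_weight x t := \prod_(p <- pairmap (@edge n) x t) Q p.1 p.2.

Lemma path_weight_ge0 x t : 0 <= path_weight x t.
Proof. by apply: prodr_ge0 => p _; case/andP: (Q01 p.1 p.2). Qed.

Lemma graph_expect_path x t : uniq (x :: t) ->
  graph_expect (fun E => (path (adj E) x t)%:R) = path_weight x t.
Proof.
move=> uxt; have sub_vpairs : [set p in pairmap (@edge n) x t] \subset vpairs n.
  by apply/subsetP => p; rewrite inE; apply: pairmap_edge_vpairs.
under eq_graph_expect => E Ev do rewrite path_adj_edges //.
rewrite graph_expect_subset // /path_weight big_uniq ?uniq_pairmap_edge //.
by apply: eq_bigl => p; rewrite inE.
Qed.

Hypothesis Qsym : Q^T = Q.

Lemma Q_edge x y : Q (edge x y).1 (edge x y).2 = Q x y.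
Proof. by rewrite /edge; case: ifP => //= _; rewrite -[in RHS]Qsym mxE. Qed.

Lemma path_weight_cons x y t : path_weight x (y :: t) = Q x y * path_weight y t.
Proof. by rewrite /path_weight /= big_cons Q_edge. Qed.

Section UpperBound.
Variables (S : {set 'I_n}) (gamma : R).
Hypothesis row_sum_le : forall i, \sum_(j in ~: S) Q i j <= gamma.

Lemma sum_walks_le k x :
  \sum_(t : k.-tuple 'I_n) (all [predC S] t)%:R * path_weight x t <= gamma ^+ k.
Proof.
elim: k x => [|k IHk] x.
  rewrite (big_pred1 [tuple]) => [|t]; last exact/esym/eqP/tuple0.
  by rewrite /path_weight big_nil mulr1.
have gamma_ge0 : 0 <= gamma.
  by apply: le_trans (row_sum_le x); apply: sumr_ge0 => j _; case/andP: (Q01 x j).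
rewrite big_tuple_cons (@le_trans _ _ (\sum_(y in ~: S) Q x y * gamma ^+ k)) //; last first.
  by rewrite -mulr_suml exprS ler_wpM2r ?exprn_ge0.
rewrite [X in _ <= X]big_mkcond ler_sum // => y _ /=; rewrite inE.
under eq_bigr => t _ do rewrite path_weight_cons.
case: (y \in S) => /=; first by rewrite big1 // => t _; rewrite mul0r.
under eq_bigr => t _ do rewrite mulrCA.
by rewrite -mulr_sumr ler_wpM2l ?IHk //; case/andP: (Q01 x y).
Qed.

Lemma graph_expect_escape_path s t :
  graph_expect (fun E => (escape_path E S s t)%:R) <= (all [predC S] t)%:R * path_weight s t.
Proof.
rewrite /escape_path; have [ust|_] /= := boolP (uniq (s :: t)); last first.
  by rewrite graph_expect_cst mulr_ge0 ?ler0n ?path_weight_ge0.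
case: (all _ t) => /=; last by rewrite graph_expect_cst mul0r.
by rewrite mul1r graph_expect_path.
Qed.

Lemma expected_GS_le : expected_GS Q S <= #|S|%:R * \sum_(k < n) gamma ^+ k.
Proof.
apply: (@le_trans _ _ (graph_expect (fun E =>
    \sum_(s in S) \sum_(k < n) \sum_(t : k.-tuple 'I_n) (escape_path E S s t)%:R))).
  apply: ler_graph_expect => E _; have := card_GS_le E S; rewrite -(ler_nat R).
  move/le_trans; apply; rewrite natr_sum ler_sum // => s _.
  by rewrite natr_sum ler_sum // => k _; rewrite natr_sum.
rewrite mulr_natl -sumr_const graph_expect_sum ler_sum // => s _.
rewrite graph_expect_sum ler_sum // => k _; rewrite graph_expect_sum.
by apply: le_trans (sum_walks_le k s); apply: ler_sum => t _; apply: graph_expect_escape_path.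
Qed.

End UpperBound.

Lemma graph_expect_no_edge_to S v : v \notin S ->
  graph_expect (fun E => [disjoint edges_to S v & E]%:R) = \prod_(s in S) (1 - Q v s).
Proof.
move=> vNS; rewrite graph_expect_disjoint ?edges_to_vpairs // big_imset /=.
  by apply: eq_bigr => s _; rewrite Q_edge.
by move=> s s' _ _ /edge_inj.
Qed.

Lemma expected_GS_ge S :
  #|S|%:R + \sum_(v in ~: S) (1 - \prod_(s in S) (1 - Q v s)) <= expected_GS Q S.
Proof.
apply: (@le_trans _ _ (graph_expect (fun E =>
    #|S|%:R + \sum_(v in ~: S) (~~ [disjoint edges_to S v & E])%:R))).
  rewrite graph_expectD graph_expect_cst graph_expect_sum lerD2l ler_sum // => v.
  rewrite inE => vNS.
  rewrite (eq_graph_expect (g := fun E => 1 - [disjoint edges_to S v & E]%:R)).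
    by rewrite graph_expectB graph_expect_cst graph_expect_no_edge_to.
  by move=> E _; case: [disjoint _ & _]; rewrite ?subrr ?subr0.
apply: ler_graph_expect => E Ev; rewrite -natr_sum -natrD ler_nat; exact: card_GS_ge.
Qed.

Section UniformLowerBound.
Variables (S : {set 'I_n}) (gamma : R).
Hypothesis uniform : forall i j : 'I_n, i != j -> i \in ~: S -> Q i j = gamma / n%:R.

Lemma expected_GS_ge_uniform :
  #|S|%:R + (n%:R - #|S|%:R) * (1 - (1 - gamma / n%:R) ^+ #|S|) <= expected_GS Q S.
Proof.
apply: le_trans (expected_GS_ge S); rewrite lerD2l.
rewrite (eq_bigr (fun=> 1 - (1 - gamma / n%:R) ^+ #|S|)) => [|v vNS].
  rewrite sumr_const (cardsCs (~: S)) setCK card_ord -[X in _ <= X]mulr_natr mulrC natrB //.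
  exact: card_ord_le.
rewrite -prodr_const; congr (1 - _); apply: eq_bigr => s sS.
by rewrite uniform //; apply: contraTneq vNS => ->; rewrite inE sS.
Qed.

End UniformLowerBound.

End Expectation.

Theorem lemma1 (R : realFieldType) (n : nat) (Q : 'M[R]_n) (S : {set 'I_n})
  (gamma : R) :
  Q^T = Q ->
  (forall i j, 0 <= Q i j <= 1) ->
  0 < gamma < 1 ->
  ((forall i : 'I_n, \sum_(j in ~: S) Q i j <= gamma) ->
     expected_GS Q S <= (1 - gamma)^-1 * (#|S|)%:R)
  /\
  ((forall i j : 'I_n, i != j -> i \in ~: S -> Q i j = gamma / n%:R) ->
     expected_GS Q S >= (n%:R + gamma * n%:R) / (n%:R + gamma * (#|S|)%:R) * (#|S|)%:R).
Proof.
move=> Qsym Q01 /andP[gamma_gt0 gamma_lt1]; split=> [row_sum_le | uniform].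
  apply: le_trans (expected_GS_le Q01 Qsym row_sum_le) _.
  by rewrite mulrC ler_wpM2r ?ler0n // geometric_sum_le // ltW.
apply: le_trans (expected_GS_ge_uniform Q01 Qsym uniform).
apply: lower_bound_arith; first by rewrite ler0n ler_nat card_ord_le.
  exact: ltW.
by rewrite bernoulli_dual_div ?card_ord_le // (ltW gamma_gt0) (ltW gamma_lt1).
Qed.
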